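(* For every hypergraph $\mathcal{H}=(Q,\mathcal{S})$ with all hyperedges nonempty and $S_n=Q$, the graph $G_{\mathcal{H}}$ is $(2P_1+2P_2)$-free, $3P_2$-free and $2P_3$-free.
   Context: A hypergraph $\mathcal{H}=(Q,\mathcal{S})$ has element set $Q=\{q_1,\dots,q_m\}$ and hyperedges $\mathcal{S}=\{S_1,\dots,S_n\}$, $S_j\subseteq Q$. The graph $G_{\mathcal{H}}$ has vertex set $Q\cup\mathcal{S}\cup\mathcal{S}'\cup\{t_1,t_2\}$, where $\mathcal{S}'=\{S_1',\dots,S_n'\}$ is a set of $n$ new vertices, and edges: $q_iS_j$ and $q_iS_j'$ whenever $q_i\in S_j$; $S_jS_\ell'$ for all $j,\ell\in\{1,\dots,n\}$; $q_hq_i$ for all distinct $h,i$ (so $Q$ is a clique); $t_1S_j$ and $t_2S_j'$ for all $j$. There are no other edges. $+$ denotes disjoint union, $sG$ the disjoint union of $s$ copies of $G$, $P_r$ the path on $r$ vertices; $H$-free means no induced subgraph isomorphic to $H$. *)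

From mathcomp Require Import all_boot.
Set Implicit Arguments. Unset Strict Implicit. Unset Printing Implicit Defensive.

Definition induced_free (VH : finType) (eH : rel VH) (V : finType) (eG : rel V) : Prop :=
  ~ exists f : VH -> V, injective f /\ forall x y, eH x y = eG (f x) (f y).

Definition path_rel (r : nat) : rel 'I_r :=
  fun i j => (i.+1 == j :> nat) || (j.+1 == i :> nat).

Definition sum_rel (T1 T2 : finType) (e1 : rel T1) (e2 : rel T2) : rel (T1 + T2)%type :=
  fun x y => match x, y with
             | inl a, inl b => e1 a b
             | inr a, inr b => e2 a b
             | _, _ => false
             end.

Definition V_2P1_2P2 : finType := (('I_1 + 'I_1) + ('I_2 + 'I_2))%type.
Definition e_2P1_2P2 : rel V_2P1_2P2 :=
  sum_rel (sum_rel (@path_rel 1) (@path_rel 1)) (sum_rel (@path_rel 2) (@path_rel 2)).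
Definition V_3P2 : finType := (('I_2 + 'I_2) + 'I_2)%type.
Definition e_3P2 : rel V_3P2 :=
  sum_rel (sum_rel (@path_rel 2) (@path_rel 2)) (@path_rel 2).
Definition V_2P3 : finType := ('I_3 + 'I_3)%type.
Definition e_2P3 : rel V_2P3 := sum_rel (@path_rel 3) (@path_rel 3).

(* The graph G_H of a hypergraph with element set Q = 'I_m and hyperedges
   S : 'I_n -> {set 'I_m}.  Vertices:
     inl (inl q)        : element q of Q
     inl (inr j)        : hyperedge vertex S_j
     inr (inl l)        : copy vertex S'_l
     inr (inr false)    : t1
     inr (inr true)     : t2 *)
Definition GH_vertex (m n : nat) : finType := (('I_m + 'I_n) + ('I_n + bool))%type.

Definition GH_adj0 (m n : nat) (S : 'I_n -> {set 'I_m}) (x y : GH_vertex m n) : bool :=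
  match x, y with
  | inl (inl q), inl (inl q') => q != q'
  | inl (inl q), inl (inr j) => q \in S j
  | inl (inl q), inr (inl l) => q \in S l
  | inl (inr _), inr (inl _) => true
  | inl (inr _), inr (inr false) => true
  | inr (inl _), inr (inr true) => true
  | _, _ => false
  end.

Definition GH_adj (m n : nat) (S : 'I_n -> {set 'I_m}) : rel (GH_vertex m n) :=
  fun x y => GH_adj0 S x y || GH_adj0 S y x.

From mathcomp Require Import all_boot.

(* In G_H the element set Q is a clique, while G_H - Q (the S_j, S'_l, t1, t2)
   is 2P2-free and (2P1+P2)-free, and each S_j or S'_l dominates every edge of
   G_H - Q (t1 and t2, which have no neighbour in Q, do not: t1 misses the edge
   t2 S'_l).  These facts force every induced 2P2 to have one edge inside Q and
   the other outside Q.  Hence 3P2 is excluded by pigeonhole, 2P3 because one of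
   its two P3 would lie in the clique Q, and 2P1+2P2 because its two isolated
   vertices lie outside Q and form a 2P1+P2 with the edge outside Q. *)

Set Implicit Arguments.
Unset Strict Implicit.
Unset Printing Implicit Defensive.

Definition induced_2P2 (T : Type) (e : rel T) (a b c d : T) : bool :=
  [&& e a b, e c d, ~~ e a c, ~~ e a d, ~~ e b c & ~~ e b d].

Lemma induced_2P2_embed (T T' : Type) (e : rel T) (e' : rel T') (f : T -> T') :
    (forall x y, e x y = e' (f x) (f y)) ->
  forall a b c d, induced_2P2 e a b c d -> induced_2P2 e' (f a) (f b) (f c) (f d).
Proof. by move=> f_ind a b c d; rewrite /induced_2P2 !f_ind. Qed.

Section InducedSubgraphsMeetingClique.

Variables (V : finType) (e : rel V) (Q : pred V).
Hypothesis e_sym : symmetric e.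
Hypothesis Q_clique : forall x y, Q x -> Q y -> x != y -> e x y.
Hypothesis nonQ_2P2_free : forall a b c d, induced_2P2 e a b c d -> [|| Q a, Q b, Q c | Q d].
Hypothesis Q_neighbour_dominates : forall a b c d,
  e a b -> e c d -> ~~ e b c -> ~~ e b d -> Q a -> [|| Q b, Q c | Q d].
Hypothesis nonQ_2P1_P2_free : forall u v x y, u != v -> ~~ e u v ->
  ~~ e u x -> ~~ e u y -> ~~ e v x -> ~~ e v y -> e x y -> [|| Q u, Q v, Q x | Q y].

Lemma nonadj_distinct_not_both_Q x y : x != y -> ~~ e x y -> ~~ (Q x && Q y).
Proof. by move=> neq_xy; apply: contra => /andP[Qx Qy]; apply: Q_clique. Qed.

Lemma nonadj_not_both_Q x y z : e x z -> ~~ e z y -> ~~ e x y -> ~~ (Q x && Q y).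
Proof.
move=> exz nezy; apply: nonadj_distinct_not_both_Q.
by apply: contraNneq nezy => <-; rewrite e_sym.
Qed.

Lemma induced_2P2_sides a b c d : induced_2P2 e a b c d ->
  [&& Q a, Q b, ~~ Q c & ~~ Q d] || [&& ~~ Q a, ~~ Q b, Q c & Q d].
Proof.
move=> i2P2; have := nonQ_2P2_free i2P2.
case/and5P: i2P2 => eab ecd neac nead /andP[nebc nebd].
have [eba edc] : e b a /\ e d c by rewrite (e_sym b) (e_sym d).
have [neca neda necb nedb] : [/\ ~~ e c a, ~~ e d a, ~~ e c b & ~~ e d b].
  by rewrite !(e_sym c) !(e_sym d).
have := nonadj_not_both_Q eab nebc neac; have := nonadj_not_both_Q eab nebd nead.
have := nonadj_not_both_Q eba neac nebc; have := nonadj_not_both_Q eba nead nebd.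
have /implyP := Q_neighbour_dominates eab ecd nebc nebd.
have /implyP := Q_neighbour_dominates eba ecd neac nead.
have /implyP := Q_neighbour_dominates ecd eab neda nedb.
have /implyP := Q_neighbour_dominates edc eab neca necb.
by case: (Q a); case: (Q b); case: (Q c); case: (Q d).
Qed.

Lemma induced_2P1_2P2_free : induced_free e_2P1_2P2 e.
Proof.
move=> [f [f_inj f_ind]].
have adj x y : e_2P1_2P2 x y -> e (f x) (f y) by rewrite f_ind.
have nonadj x y : ~~ e_2P1_2P2 x y -> ~~ e (f x) (f y) by rewrite f_ind.
pose u : V_2P1_2P2 := inl (inl ord0); pose v : V_2P1_2P2 := inl (inr ord0).
pose a : V_2P1_2P2 := inr (inl ord0); pose b : V_2P1_2P2 := inr (inl ord_max).
pose c : V_2P1_2P2 := inr (inr ord0); pose d : V_2P1_2P2 := inr (inr ord_max).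
have neq_uv : f u != f v by rewrite (inj_eq f_inj).
have := induced_2P2_sides (induced_2P2_embed f_ind (isT : induced_2P2 e_2P1_2P2 a b c d)).
have := nonadj_not_both_Q (adj a b isT) (nonadj b u isT) (nonadj a u isT).
have := nonadj_not_both_Q (adj a b isT) (nonadj b v isT) (nonadj a v isT).
have := nonadj_not_both_Q (adj c d isT) (nonadj d u isT) (nonadj c u isT).
have := nonadj_not_both_Q (adj c d isT) (nonadj d v isT) (nonadj c v isT).
have := nonQ_2P1_P2_free neq_uv (nonadj u v isT) (nonadj u a isT) (nonadj u b isT)
  (nonadj v a isT) (nonadj v b isT) (adj a b isT).
have := nonQ_2P1_P2_free neq_uv (nonadj u v isT) (nonadj u c isT) (nonadj u d isT)
  (nonadj v c isT) (nonadj v d isT) (adj c d isT).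
by case: (Q (f u)); case: (Q (f v)); case: (Q (f a)); case: (Q (f b)); case: (Q (f c));
  case: (Q (f d)).
Qed.

Lemma induced_3P2_free : induced_free e_3P2 e.
Proof.
move=> [f [_ f_ind]].
have sides x y z w (i2P2 : induced_2P2 e_3P2 x y z w) :=
  induced_2P2_sides (induced_2P2_embed f_ind i2P2).
pose a : V_3P2 := inl (inl ord0); pose b : V_3P2 := inl (inl ord_max).
pose c : V_3P2 := inl (inr ord0); pose d : V_3P2 := inl (inr ord_max).
pose x : V_3P2 := inr ord0; pose y : V_3P2 := inr ord_max.
have := sides a b c d isT; have := sides a b x y isT; have := sides c d x y isT.
by case: (Q (f a)); case: (Q (f b)); case: (Q (f c)); case: (Q (f d)); case: (Q (f x));
  case: (Q (f y)).
Qed.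

Lemma induced_2P3_free : induced_free e_2P3 e.
Proof.
move=> [f [f_inj f_ind]].
have sides x y z w (i2P2 : induced_2P2 e_2P3 x y z w) :=
  induced_2P2_sides (induced_2P2_embed f_ind i2P2).
have ends_not_both_Q x y : x != y -> ~~ e_2P3 x y -> ~~ (Q (f x) && Q (f y)).
  by move=> neq_xy nexy; apply: nonadj_distinct_not_both_Q; rewrite ?(inj_eq f_inj) -?f_ind.
pose a : V_2P3 := inl ord0; pose b : V_2P3 := inl (@Ordinal 3 1 isT).
pose c : V_2P3 := inl ord_max; pose x : V_2P3 := inr ord0.
pose y : V_2P3 := inr (@Ordinal 3 1 isT); pose z : V_2P3 := inr ord_max.
have := sides a b x y isT; have := sides b c y z isT.
have := ends_not_both_Q a c isT isT; have := ends_not_both_Q x z isT isT.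
by case: (Q (f a)); case: (Q (f b)); case: (Q (f c)); case: (Q (f x)); case: (Q (f y));
  case: (Q (f z)).
Qed.

End InducedSubgraphsMeetingClique.

Section GH_structure.

Variables (m n : nat) (S : 'I_n -> {set 'I_m}).

Definition GH_elem : pred (GH_vertex m n) :=
  fun v => if v is inl (inl _) then true else false.

Lemma GH_adj_sym : symmetric (GH_adj S).
Proof. by move=> x y; rewrite /GH_adj orbC. Qed.

Lemma GH_elem_clique x y : GH_elem x -> GH_elem y -> x != y -> GH_adj S x y.
Proof. by case: x => [[q|]|] //; case: y => [[q'|]|] // _ _; rewrite /GH_adj /= => ->. Qed.

Lemma GH_nonelem_2P2_free a b c d : induced_2P2 (GH_adj S) a b c d ->
  [|| GH_elem a, GH_elem b, GH_elem c | GH_elem d].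
Proof.
by case: a => [[?|?]|[?|[]]]; case: b => [[?|?]|[?|[]]]; case: c => [[?|?]|[?|[]]];
  case: d => [[?|?]|[?|[]]].
Qed.

Lemma GH_elem_neighbour_dominates a b c d :
  GH_adj S a b -> GH_adj S c d -> ~~ GH_adj S b c -> ~~ GH_adj S b d -> GH_elem a ->
  [|| GH_elem b, GH_elem c | GH_elem d].
Proof.
by case: a => [[?|?]|[?|[]]]; case: b => [[?|?]|[?|[]]]; case: c => [[?|?]|[?|[]]];
  case: d => [[?|?]|[?|[]]].
Qed.

Lemma GH_nonelem_2P1_P2_free a b c d : a != b -> ~~ GH_adj S a b ->
  ~~ GH_adj S a c -> ~~ GH_adj S a d -> ~~ GH_adj S b c -> ~~ GH_adj S b d -> GH_adj S c d ->
  [|| GH_elem a, GH_elem b, GH_elem c | GH_elem d].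
Proof.
by case: a => [[?|?]|[?|[]]]; case: b => [[?|?]|[?|[]]]; case: c => [[?|?]|[?|[]]];
  case: d => [[?|?]|[?|[]]].
Qed.

End GH_structure.

Theorem lemma28 (m n : nat) (S : 'I_n.+1 -> {set 'I_m})
  (Hne : forall j, S j != set0)
  (Hlast : S ord_max = [set: 'I_m]) :
  [/\ induced_free e_2P1_2P2 (GH_adj S),
      induced_free e_3P2 (GH_adj S)
    & induced_free e_2P3 (GH_adj S)].
Proof.
have sym := @GH_adj_sym _ _ S; have clique := @GH_elem_clique _ _ S.
have free2P2 := @GH_nonelem_2P2_free _ _ S.
have dominates := @GH_elem_neighbour_dominates _ _ S.
have free2P1P2 := @GH_nonelem_2P1_P2_free _ _ S.
split.
- exact: induced_2P1_2P2_free sym clique free2P2 dominates free2P1P2.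
- exact: induced_3P2_free sym clique free2P2 dominates.
- exact: induced_2P3_free sym clique free2P2 dominates.
Qed.
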